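(* There is a primitive recursive function $\bar h:\mathbb{N}^3\to\mathbb{N}$ such that for all integers $n\ge1$, $k$, all finite nonempty $X\subseteq\mathbb{N}$, all families $(T_\rho:\rho\in 2^{\min X})$ and all $C$ satisfying (a) $|X|\ge\bar h(\min X,n,k)$, (b) each $T_\rho$ is an $X$-quasistrong tree all of whose elements are compatible with $\rho$, (c) $C:\bigcup_\rho T_\rho\to k$ is a coloring, there exist $Z\subseteq X$ with $|Z|=n$ and trees $S_\rho\subseteq T_\rho$ ($\rho\in 2^{\min X}$) such that (i) $\min Z=\min X$, and (ii) each $S_\rho$ is $Z$-quasistrong and $(C,Z)$-prehomogeneous.
   Context: Strings are finite binary strings with $\preceq$ the initial-segment order; two strings are compatible if one is an initial segment of the other; $2^i$ also denotes the set of strings of length $i$; a tree is a set of strings closed under initial segments. For finite $X=\{x_0<\dots<x_n\}$, a finite tree $T$ is $X$-quasistrong if $T\cap 2^{x_i}\ne\emptyset$ for all $i\le n$ and for each $i<n$ every $\sigma\in T\cap2^{x_i}$ has exactly two incompatible extensions in $T\cap 2^{x_{i+1}}$. A tree $T$ is $(C,X)$-prehomogeneous if there is a color $c$ such that for every $i<n$, $\sigma\in T\cap 2^{x_i}$ and $\tau\in T\cap 2^{x_{i+1}}$ with $\sigma\prec\tau$, there is $\zeta\in T$ with $\sigma\preceq\zeta\preceq\tau$ and $C(\zeta)=c$. *)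

From mathcomp Require Import all_boot.
Set Implicit Arguments. Unset Strict Implicit. Unset Printing Implicit Defensive.

(** * Primitive recursive functions.
    [PRfun n f] : the restriction of [f : seq nat -> nat] to lists of
    length [n] (i.e. to N^n) is primitive recursive. *)

Fixpoint primrec (f g : seq nat -> nat) (x : nat) (v : seq nat) : nat :=
  match x with
  | 0 => f v
  | y.+1 => g (y :: primrec f g y v :: v)
  end.

Fixpoint inseq {A : Type} (a : A) (l : seq A) : Prop :=
  match l with [::] => False | b :: l' => b = a \/ inseq a l' end.

Inductive PRfun : nat -> (seq nat -> nat) -> Prop :=
| PR_zero n : PRfun n (fun _ => 0)
| PR_succ : PRfun 1 (fun v => (nth 0 v 0).+1)
| PR_proj n i : i < n -> PRfun n (fun v => nth 0 v i)
| PR_comp n m (g : seq nat -> nat) (fs : seq (seq nat -> nat)) :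
    size fs = m -> PRfun m g -> (forall f, inseq f fs -> PRfun n f) ->
    PRfun n (fun v => g (map (fun f => f v) fs))
| PR_rec n f g : PRfun n f -> PRfun n.+2 g ->
    PRfun n.+1 (fun w => primrec f g (head 0 w) (behead w))
| PR_ext n f g : PRfun n f -> (forall v, size v = n -> f v = g v) -> PRfun n g.

Definition primitive_recursive3 (h : nat -> nat -> nat -> nat) : Prop :=
  PRfun 3 (fun v => h (nth 0 v 0) (nth 0 v 1) (nth 0 v 2)).

(* strings are [seq bool]; the initial-segment order is [prefix];
   a (finite) set of strings is represented by a list [T : seq (seq bool)]
   with membership [\in]. *)

Definition compatible (s t : seq bool) : bool := prefix s t || prefix t s.

Definition is_tree (T : seq (seq bool)) : Prop :=
  forall s t, t \in T -> prefix s t -> s \in T.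

(** Finite X ⊆ ℕ is represented by a strictly increasing list [X]
    = [x_0 < ... < x_n]; x_i = nth 0 X i. *)
Definition finset_nat (X : seq nat) : Prop := sorted ltn X.

Definition exts (T : seq (seq bool)) (sigma : seq bool) (l : nat) :=
  undup [seq tau <- T | (size tau == l) && prefix sigma tau].

Definition quasistrong (X : seq nat) (T : seq (seq bool)) : Prop :=
  is_tree T /\
  (forall i, i < size X -> exists s, s \in T /\ size s = nth 0 X i) /\
  (forall i, i.+1 < size X -> forall sigma, sigma \in T ->
     size sigma = nth 0 X i ->
     size (exts T sigma (nth 0 X i.+1)) = 2 /\
     (forall t1 t2, t1 \in exts T sigma (nth 0 X i.+1) ->
        t2 \in exts T sigma (nth 0 X i.+1) -> t1 != t2 -> ~~ compatible t1 t2)).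

Definition prehomogeneous (C : seq bool -> nat) (X : seq nat)
    (T : seq (seq bool)) : Prop :=
  exists c : nat,
  forall i, i.+1 < size X -> forall sigma tau,
    sigma \in T -> size sigma = nth 0 X i ->
    tau \in T -> size tau = nth 0 X i.+1 -> prefix sigma tau ->
    exists zeta, [/\ zeta \in T, prefix sigma zeta, prefix zeta tau & C zeta = c].

(* Call a c-comb of height m above a node u a perfect binary tree of nodes of T,
   branching at m given levels, each of whose edges passes through a node of colour c.
   For one tree and colours < k+1, let d be the number of levels of X that yield a
   comb of height m+1 with colours < k.  Either some node v at a level x_a has no
   branch through the next d levels of X meeting colour k, and the induction
   hypothesis applies to v inside that window, or every node meets colour k within
   d levels, and the levels x_d, x_2d, ... carry a k-comb.  Combs survive the removal
   of levels, so the 2^(min X) trees T_rho are treated one after the other, each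
   time shrinking X to the levels found for the previous root.  The nodes below the
   leaves of the final combs form the trees S_rho. *)

From mathcomp Require Import all_boot zify.
From Stdlib Require Import Classical IndefiniteDescription.
Set Implicit Arguments. Unset Strict Implicit. Unset Printing Implicit Defensive.

Lemma PRfun_comp1 n g f : PRfun 1 g -> PRfun n f -> PRfun n (fun v => g [:: f v]).
Proof.
move=> PRg PRf; apply: (PR_ext (PR_comp (fs := [:: f]) erefl PRg _)) => //.
by move=> f' [<-|[]].
Qed.

Lemma PRfun_comp2 n g f1 f2 : PRfun 2 g -> PRfun n f1 -> PRfun n f2 ->
  PRfun n (fun v => g [:: f1 v; f2 v]).
Proof.
move=> PRg PRf1 PRf2; apply: (PR_ext (PR_comp (fs := [:: f1; f2]) erefl PRg _)) => //.
by move=> f' [<-|[<-|[]]].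
Qed.

Lemma PRfun_comp3 n g f1 f2 f3 : PRfun 3 g -> PRfun n f1 -> PRfun n f2 -> PRfun n f3 ->
  PRfun n (fun v => g [:: f1 v; f2 v; f3 v]).
Proof.
move=> PRg PRf1 PRf2 PRf3.
apply: (PR_ext (PR_comp (fs := [:: f1; f2; f3]) erefl PRg _)) => //.
by move=> f' [<-|[<-|[<-|[]]]].
Qed.

Lemma PRfun_const n c : PRfun n (fun _ => c).
Proof. by elim: c => [|c IH]; [exact: PR_zero | exact: (PR_ext (PRfun_comp1 PR_succ IH))]. Qed.

Lemma PRfun_projs n l : all (fun i => i < n) l ->
  forall f, inseq f [seq (fun v => nth 0 v i) | i <- l] -> PRfun n f.
Proof.
elim: l => //= i l IH /andP[lt_i_n /IH{}IH] f [<-|/IH//].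
exact: PR_proj.
Qed.

Lemma PRfun_iter n base step : PRfun n base -> PRfun n.+1 step ->
  PRfun n.+1 (fun v => iter (head 0 v) (fun acc => step (acc :: behead v)) (base (behead v))).
Proof.
move=> PRbase PRstep.
have PRstep' : PRfun n.+2 (fun u => step (behead u)).
  pose projs := [seq (fun v => nth 0 v i) | i <- iota 1 n.+1].
  apply: (PR_ext (PR_comp (fs := projs) _ PRstep _)).
  - by rewrite size_map size_iota.
  - apply: PRfun_projs; apply/allP => i; rewrite mem_iota; lia.
  move=> u size_u; rewrite -map_comp map_nth_iota ?size_u ?subSS //.
  by rewrite drop1 take_oversize // size_behead size_u.
apply: (PR_ext (PR_rec PRbase PRstep')) => -[|a w] //= _.
by elim: a => //= a ->.
Qed.

Lemma PRfun_add : PRfun 2 (fun v => nth 0 v 0 + nth 0 v 1).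
Proof.
apply: (PR_ext (PRfun_iter (@PR_proj 1 0 erefl) (PRfun_comp1 PR_succ (@PR_proj 2 0 erefl)))).
by move=> [|a [|b []]] //= _; rewrite addnC -iter_succn.
Qed.

Lemma PRfun_mul : PRfun 2 (fun v => nth 0 v 0 * nth 0 v 1).
Proof.
apply: (PR_ext (PRfun_iter (PRfun_const 1 0)
  (PRfun_comp2 PRfun_add (@PR_proj 2 1 erefl) (@PR_proj 2 0 erefl)))).
by move=> [|a [|b []]] //= _; rewrite mulnC -iter_addn_0.
Qed.

Lemma PRfun_exp2 : PRfun 1 (fun v => 2 ^ nth 0 v 0).
Proof.
apply: (PR_ext (PRfun_iter (PRfun_const 0 1)
  (PRfun_comp2 PRfun_add (@PR_proj 1 0 erefl) (@PR_proj 1 0 erefl)))).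
by move=> [|a []] //= _; elim: a => //= a ->; rewrite expnS mul2n addnn.
Qed.

(* [m] windows of the size needed with one colour fewer, plus the root level. *)
Definition comb_bound k m := iter k (fun d => m * d + 1) 2.

Lemma comb_bound_gt0 k m : 0 < comb_bound k m.
Proof. by case: k => //= k; rewrite addn1. Qed.

Definition hbar x0 n k := iter (2 ^ x0) (comb_bound k) n.

Lemma PRfun_comb_bound : PRfun 2 (fun v => comb_bound (nth 0 v 0) (nth 0 v 1)).
Proof.
apply: (PR_ext (PRfun_iter (PRfun_const 1 2) (PRfun_comp2 PRfun_add
  (PRfun_comp2 PRfun_mul (@PR_proj 2 1 erefl) (@PR_proj 2 0 erefl)) (PRfun_const 2 1)))).
by move=> [|a [|b []]].
Qed.

Lemma hbar_primrec : primitive_recursive3 hbar.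
Proof.
have PRiter : PRfun 3 (fun v => iter (nth 0 v 0) (comb_bound (nth 0 v 2)) (nth 0 v 1)).
  apply: (PR_ext (PRfun_iter (@PR_proj 2 0 erefl)
    (PRfun_comp2 PRfun_comb_bound (@PR_proj 3 2 erefl) (@PR_proj 3 0 erefl)))).
  by move=> [|a [|b [|c []]]].
exact: (PR_ext (PRfun_comp3 PRiter (PRfun_comp1 PRfun_exp2 (@PR_proj 3 0 erefl))
  (@PR_proj 3 1 erefl) (@PR_proj 3 2 erefl))).
Qed.

Lemma sorted_subset_subseq (s1 s2 : seq nat) :
  sorted ltn s1 -> sorted ltn s2 -> {subset s1 <= s2} -> subseq s1 s2.
Proof.
move=> s1_sorted s2_sorted s12.
apply/subseq_uniqP; first exact: sorted_uniq ltn_trans ltnn _ s2_sorted.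
apply: (irr_sorted_eq ltn_trans ltnn) => //; first exact: (sorted_filter ltn_trans).
by move=> x; rewrite mem_filter; apply/idP/andP => [x_s1|[]//]; split => //; apply: s12.
Qed.

Lemma sorted_nth_ltn (X : seq nat) i j :
  sorted ltn X -> i < j -> j < size X -> nth 0 X i < nth 0 X j.
Proof.
by move=> sX lt_ij lt_jX; apply: (sorted_ltn_nth ltn_trans) => //; rewrite inE (ltn_trans lt_ij).
Qed.

Lemma sorted_nth_leq (X : seq nat) i j :
  sorted ltn X -> i <= j -> j < size X -> nth 0 X i <= nth 0 X j.
Proof.
by move=> sX; rewrite leq_eqVlt => /predU1P[-> //|lt_ij lt_jX]; rewrite ltnW ?sorted_nth_ltn.
Qed.

Lemma path_leq_nth (z : nat) Z i : path ltn z Z -> i <= size Z -> z <= nth 0 (z :: Z) i.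
Proof. by move=> pathZ le_i; apply: (sorted_nth_leq (X := z :: Z) (i := 0) pathZ). Qed.

Lemma path_ltn_leq (x y : nat) s : x <= y -> path ltn y s -> path ltn x s.
Proof. by case: s => //= a s le_xy /andP[lt_ya ->]; rewrite (leq_ltn_trans le_xy). Qed.

Lemma path_ltn_mem (x y : nat) s : path ltn x s -> y \in s -> x < y.
Proof. by move/(order_path_min ltn_trans)/allP; apply. Qed.

Lemma prefix_common (a b t : seq bool) :
  prefix a t -> prefix b t -> size a <= size b -> prefix a b.
Proof. by rewrite !prefixE => /eqP a_t /eqP b_t le_ab; rewrite -{2}a_t -b_t take_takel. Qed.

Lemma prefix_size_eq (a b : seq bool) : prefix a b -> size a = size b -> a = b.
Proof. by rewrite prefixE => /eqP a_b eq_ab; rewrite -a_b eq_ab take_size. Qed.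

Lemma prefix_common_eq (a b t : seq bool) :
  prefix a t -> prefix b t -> size a = size b -> a = b.
Proof.
move=> a_t b_t eq_ab; apply: (prefix_size_eq _ eq_ab).
by apply: prefix_common a_t b_t _; rewrite eq_ab.
Qed.

Lemma prefix_neq (a b a' b' : seq bool) :
  prefix a a' -> prefix b b' -> size a = size b -> a != b -> a' != b'.
Proof.
move=> a_a' b_b' eq_ab; apply: contra => /eqP eq_a'b'.
by rewrite (prefix_common_eq a_a' _ eq_ab) // eq_a'b'.
Qed.

Lemma compatible_size_eq (a b : seq bool) : size a = size b -> compatible a b -> a = b.
Proof. by move=> eq_ab /orP[] /prefix_size_eq ->. Qed.

Definition ext_at (T : seq (seq bool)) sigma l tau :=
  [/\ tau \in T, size tau = l & prefix sigma tau].

Lemma mem_exts T sigma l tau : tau \in exts T sigma l <-> ext_at T sigma l tau.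
Proof.
rewrite mem_undup mem_filter; split => [/andP[/andP[/eqP ? ?] ?] | [-> -> ->]] //.
by rewrite eqxx.
Qed.

Lemma exts_two T sigma l : size (exts T sigma l) = 2 ->
  exists tau1 tau2, [/\ tau1 != tau2, ext_at T sigma l tau1 & ext_at T sigma l tau2].
Proof.
have := undup_uniq [seq tau <- T | (size tau == l) && prefix sigma tau].
have mem tau : tau \in exts T sigma l -> ext_at T sigma l tau by move/mem_exts.
rewrite /exts in mem *; case: (undup _) mem => [|a [|b []]] // mem /=.
rewrite inE andbT => neq_ab _; exists a, b; split => //; apply: mem; rewrite !inE eqxx ?orbT //.
Qed.

Lemma size_exts_two T sigma l tau1 tau2 : tau1 != tau2 ->
  ext_at T sigma l tau1 -> ext_at T sigma l tau2 ->
  (forall tau, ext_at T sigma l tau -> tau = tau1 \/ tau = tau2) ->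
  size (exts T sigma l) = 2.
Proof.
move=> neq12 ext1 ext2 only12; rewrite -[2]/(size [:: tau1; tau2]).
apply/perm_size/uniq_perm; rewrite ?undup_uniq //= ?inE ?neq12 // => tau.
rewrite !inE; apply/idP/idP => [/mem_exts/only12 [] -> | /orP[] /eqP ->]; rewrite ?eqxx ?orbT //.
all: exact/mem_exts.
Qed.

Definition window (X : seq nat) a d := take d (drop a X).

Lemma window_props (X : seq nat) a d : sorted ltn X -> 0 < d -> a + d <= size X ->
  [/\ sorted ltn (window X a d), {subset window X a d <= X}, size (window X a d) = d,
      head 0 (window X a d) = nth 0 X a & {in window X a d, forall x, x <= nth 0 X (a + d.-1)}].
Proof.
rewrite /window => sX d_gt0 fits; have size_w : size (take d (drop a X)) = d.
  by rewrite size_takel // size_drop; lia.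
split => //; first exact/take_sorted/drop_sorted.
- by move=> x /mem_take /mem_drop.
- by rewrite -nth0 nth_take // nth_drop addn0.
move=> x /(nthP 0) [i]; rewrite size_w => lt_id <-.
rewrite nth_take // nth_drop; apply: sorted_nth_leq => //; lia.
Qed.

Fixpoint stride (X : seq nat) d i j :=
  if j is j'.+1 then nth 0 X (i + d) :: stride X d (i + d) j' else [::].

Lemma stride_props (X : seq nat) d i j : sorted ltn X -> 0 < d -> i + j * d < size X ->
  [/\ path ltn (nth 0 X i) (stride X d i j), {subset stride X d i j <= X}
    & size (stride X d i j) = j].
Proof.
move=> sX d_gt0; elim: j i => [//|j IH] i; rewrite mulSn => fits.
have [|path_j sub_j size_j] := IH (i + d); first by lia.
split; rewrite /= ?size_j //.
- by rewrite path_j sorted_nth_ltn //; lia.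
- by move=> x; rewrite inE => /predU1P[->|/sub_j //]; apply/mem_nth/(leq_ltn_trans _ fits); lia.
Qed.

Section Combs.
Variables (T : seq (seq bool)) (C : seq bool -> nat).

Definition splitting (X : seq nat) := forall l1 l2, l1 \in X -> l2 \in X -> l1 < l2 ->
  forall sigma, sigma \in T -> size sigma = l1 ->
  exists tau1 tau2, [/\ tau1 != tau2, ext_at T sigma l2 tau1 & ext_at T sigma l2 tau2].

Lemma splitting_sub X Y : {subset Y <= X} -> splitting X -> splitting Y.
Proof. by move=> YX splitX l1 l2 /YX l1X /YX l2X; apply: splitX. Qed.

Lemma splitting_ext X l1 l2 sigma : splitting X -> l1 \in X -> l2 \in X -> l1 <= l2 ->
  sigma \in T -> size sigma = l1 -> exists tau, ext_at T sigma l2 tau.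
Proof.
move=> splitX l1X l2X; rewrite leq_eqVlt => /predU1P[<- | lt12] sigmaT size_sigma.
  by exists sigma; split; rewrite ?prefix_refl.
by have [tau [_ [_ ext _]]] := splitX _ _ l1X l2X lt12 _ sigmaT size_sigma; exists tau.
Qed.

Definition hom_step c sigma l tau :=
  ext_at T sigma l tau /\ exists zeta, [/\ prefix sigma zeta, prefix zeta tau & C zeta = c].

Fixpoint comb c Z sigma : Prop :=
  if Z is z :: Z' then
    exists tau1 tau2, [/\ tau1 != tau2, hom_step c sigma z tau1, hom_step c sigma z tau2,
                          comb c Z' tau1 & comb c Z' tau2]
  else True.

Lemma hom_step_reroot c u v l tau : prefix u v -> hom_step c v l tau -> hom_step c u l tau.
Proof.
move=> uv [[tauT size_tau v_tau] [zeta [v_zeta zeta_tau Czeta]]].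
by split; [split; rewrite // (prefix_trans uv) | exists zeta; rewrite (prefix_trans uv)].
Qed.

Lemma hom_step_ext c sigma l l' tau rho :
  hom_step c sigma l tau -> ext_at T tau l' rho -> hom_step c sigma l' rho.
Proof.
move=> [[_ _ sigma_tau] [zeta [sigma_zeta zeta_tau Czeta]]] [rhoT size_rho tau_rho].
split; first by split; rewrite // (prefix_trans sigma_tau).
by exists zeta; rewrite (prefix_trans zeta_tau).
Qed.

Lemma comb_reroot c Z u v : prefix u v -> comb c Z v -> comb c Z u.
Proof.
case: Z => //= z Z uv [tau1 [tau2 [neq step1 step2 comb1 comb2]]].
by exists tau1, tau2; split => //; apply: hom_step_reroot uv _.
Qed.

Lemma comb_behead c z Z sigma : comb c (z :: Z) sigma -> comb c Z sigma.
Proof.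
case: Z => //= z' Z [tau1 [tau2 [neq step1 step2 [rho1 [_ [_ [ext1 _] _ comb1 _]]]
  [rho2 [_ [_ [ext2 _] _ comb2 _]]]]]].
exists rho1, rho2; split => //; [| exact: hom_step_ext step1 ext1 | exact: hom_step_ext step2 ext2].
case: ext1 ext2 step1 step2 => _ _ tau_rho1 [_ _ tau_rho2] [[_ size1 _] _] [[_ size2 _] _].
by apply: prefix_neq tau_rho1 tau_rho2 _ neq; rewrite size1 size2.
Qed.

Lemma comb_subseq c Z Z' sigma : subseq Z' Z -> comb c Z sigma -> comb c Z' sigma.
Proof.
elim: Z Z' sigma => [|z Z IH] [|z' Z'] sigma //=.
case: eqP => [<- sub [tau1 [tau2 [neq step1 step2 comb1 comb2]]] | _ sub /comb_behead].
  by exists tau1, tau2; split => //; apply: IH.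
exact: IH sub.
Qed.

Definition colours_lt k (X : seq nat) u := forall tau zeta, tau \in T -> size tau \in X ->
  prefix u zeta -> prefix zeta tau -> C zeta < k.

Lemma colours_lt_sub k X (Y : seq nat) u :
  {subset Y <= X} -> colours_lt k X u -> colours_lt k Y u.
Proof. by move=> YX colX tau zeta tauT /YX; apply: colX. Qed.

Lemma tree_colours_lt k X u : is_tree T -> (forall s, s \in T -> C s < k) -> colours_lt k X u.
Proof. by move=> treeT colT tau zeta tauT _ _ zeta_tau; apply/colT/(treeT _ _ tauT zeta_tau). Qed.

Lemma colours_lt_avoid k X (Y : seq nat) u v l : splitting X -> {subset Y <= X} -> l \in X ->
  {in Y, forall x, x <= l} -> prefix u v -> colours_lt k.+1 X u ->
  ~ (exists tau, hom_step k v l tau) -> colours_lt k Y v.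
Proof.
move=> splitX YX lX Y_le uv colX miss tau zeta tauT tauY v_zeta zeta_tau.
have [rho [rhoT size_rho tau_rho]] :=
  splitting_ext splitX (YX _ tauY) lX (Y_le _ tauY) tauT erefl.
have: C zeta != k.
  apply/eqP => Czeta; apply: miss; exists rho.
  split; last by exists zeta; rewrite (prefix_trans zeta_tau).
  by split; rewrite // (prefix_trans v_zeta) // (prefix_trans zeta_tau).
by rewrite ltn_neqAle => -> /=; apply: colX (prefix_trans uv v_zeta) zeta_tau; rewrite ?YX.
Qed.

Lemma comb_stride k X d u : sorted ltn X -> splitting X -> 0 < d ->
  (forall a v, a + d.-1 < size X -> v \in T -> prefix u v -> size v = nth 0 X a ->
     exists tau, hom_step k v (nth 0 X (a + d.-1)) tau) ->
  forall j i v, i + j * d < size X -> v \in T -> prefix u v -> size v = nth 0 X i ->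
  comb k (stride X d i j) v.
Proof.
move=> sX splitX d_gt0 hit; elim=> [//|j IH] i v; rewrite mulSn => fits vT uv size_v /=.
have lt_i1X : i.+1 < size X by lia.
have [w1 [w2 [neq [w1T size_w1 vw1] [w2T size_w2 vw2]]]] :=
  splitX _ _ (mem_nth 0 (ltnW lt_i1X)) (mem_nth 0 lt_i1X) (sorted_nth_ltn sX (ltnSn i) lt_i1X)
    v vT size_v.
have shift : i.+1 + d.-1 = i + d by lia.
have fits1 : i.+1 + d.-1 < size X by lia.
have [tau1 step1] := hit _ _ fits1 w1T (prefix_trans uv vw1) size_w1.
have [tau2 step2] := hit _ _ fits1 w2T (prefix_trans uv vw2) size_w2.
rewrite shift in step1 step2; have [[tau1T size1 w_tau1] _] := step1.
have [[tau2T size2 w_tau2] _] := step2.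
exists tau1, tau2; split; [|exact: hom_step_reroot vw1 step1|exact: hom_step_reroot vw2 step2|..].
- by apply: prefix_neq w_tau1 w_tau2 _ neq; rewrite size_w1 size_w2.
- apply: (IH (i + d)); rewrite -?addnA //.
  exact: prefix_trans uv (prefix_trans vw1 w_tau1).
- apply: (IH (i + d)); rewrite -?addnA //.
  exact: prefix_trans uv (prefix_trans vw2 w_tau2).
Qed.

Lemma comb_exists k m X u : sorted ltn X -> head 0 X = size u -> u \in T -> splitting X ->
  comb_bound k m <= size X -> colours_lt k X u ->
  exists c Z, [/\ path ltn (size u) Z, {subset Z <= X}, size Z = m & comb c Z u].
Proof.
elim: k m X u => [|k IHk] [|m] X u sX hX uT splitX bound colX; try by exists 0, [::].
  case: X hX bound colX {sX splitX} => // x X hX _ /(_ u u uT).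
  by rewrite -hX mem_head !prefix_refl => /(_ isT isT isT).
have d_gt0 := comb_bound_gt0 k m.+1; set d := comb_bound k m.+1 in d_gt0 bound.
have {}bound : m.+1 * d + 1 <= size X := bound.
have [[a [v [fits vT uv size_v miss]]] | hit] := classic (exists a v,
  [/\ a + d.-1 < size X, v \in T, prefix u v, size v = nth 0 X a &
      ~ exists tau, hom_step k v (nth 0 X (a + d.-1)) tau]).
  have [|sY YX size_Y head_Y Y_le] := window_props (a := a) sX d_gt0; first by lia.
  have [c [Z [pathZ ZY size_Z combZ]]] := IHk m.+1 (window X a d) v sY
    (etrans head_Y (esym size_v)) vT (splitting_sub YX splitX) (eq_leq (esym size_Y))
    (colours_lt_avoid splitX YX (mem_nth 0 fits) Y_le uv colX miss).
  exists c, Z; split; [exact: path_ltn_leq (size_prefix uv) pathZ|by move=> x /ZY /YX|done|].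
  exact: comb_reroot uv combZ.
have fitsS : 0 + m.+1 * d < size X by lia.
have [pathS SX sizeS] := stride_props sX d_gt0 fitsS.
exists k, (stride X d 0 m.+1); split; rewrite -?hX -?nth0 //.
apply: (comb_stride sX splitX d_gt0 _ fitsS uT (prefix_refl u)); last by rewrite nth0.
move=> a v fits vT uv size_v; apply: NNPP => miss; apply: hit.
by exists a, v.
Qed.

End Combs.

Lemma combs_exist (T : seq bool -> seq (seq bool)) C k (R : seq (seq bool)) m X :
  sorted ltn X -> iter (size R) (comb_bound k) m.+1 <= size X ->
  (forall rho, rho \in R -> [/\ rho \in T rho, size rho = head 0 X, splitting (T rho) X
                              & colours_lt (T rho) C k X rho]) ->
  exists Z, [/\ path ltn (head 0 X) Z, {subset Z <= X}, size Z = m &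
                forall rho, rho \in R -> exists c, comb (T rho) C c Z rho].
Proof.
elim: R X => [|rho R IH] X sX bound rootR.
  case: X sX bound {rootR} => // x X sX bound; exists (take m X); split => //.
  - exact: (take_sorted m.+1 sX).
  - by move=> y /mem_take y_X; rewrite inE y_X orbT.
  - by rewrite size_takel.
have [rhoT size_rho split_rho col_rho] := rootR rho (mem_head _ _).
have [c [Z1 [path1 sub1 size1 comb1]]] :=
  comb_exists sX (esym size_rho) rhoT split_rho bound col_rho.
have X1X : {subset head 0 X :: Z1 <= X}.
  move=> x; rewrite inE => /predU1P[-> | /sub1 //]; rewrite -nth0 mem_nth //.
  exact: leq_trans (comb_bound_gt0 _ _) bound.
have sX1 : sorted ltn (head 0 X :: Z1) by rewrite /= -size_rho.
have bound1 : iter (size R) (comb_bound k) m.+1 <= size (head 0 X :: Z1) by rewrite /= size1.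
have rootR1 r : r \in R -> [/\ r \in T r, size r = head 0 (head 0 X :: Z1),
    splitting (T r) (head 0 X :: Z1) & colours_lt (T r) C k (head 0 X :: Z1) r].
  move=> rR; have [rT size_r split_r col_r] := rootR r (mem_behead (s := rho :: R) rR).
  by split => //; [exact: splitting_sub X1X split_r | exact: colours_lt_sub X1X col_r].
have [Z [pathZ subZ sizeZ combsZ]] := IH _ sX1 bound1 rootR1.
exists Z; split => //; first by move=> x /subZ /X1X.
move=> r; rewrite inE => /predU1P[-> | /combsZ //]; exists c; apply: comb_subseq comb1.
apply: sorted_subset_subseq; [exact: path_sorted pathZ | exact: path_sorted path1 |].
move=> x xZ; have := subZ x xZ; rewrite inE => /predU1P[x_head | //].
by have := path_ltn_mem pathZ xZ; rewrite x_head ltnn.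
Qed.

Definition below (L : seq (seq bool)) s := has (prefix s) L.

Lemma below_cat L1 L2 s : below (L1 ++ L2) s = below L1 s || below L2 s.
Proof. exact: has_cat. Qed.

Lemma below_trans L s t : prefix s t -> below L t -> below L s.
Proof. by move=> st /hasP[x xL tx]; apply/hasP; exists x; rewrite // (prefix_trans st). Qed.

Section Leaves.
Variables (T : seq (seq bool)) (C : seq bool -> nat) (c : nat).

Fixpoint comb_leaves Z sigma L : Prop :=
  if Z is z :: Z' then
    exists tau1 tau2 L1 L2, L = L1 ++ L2 /\
      [/\ tau1 != tau2, hom_step T C c sigma z tau1, hom_step T C c sigma z tau2,
          comb_leaves Z' tau1 L1 & comb_leaves Z' tau2 L2]
  else L = [:: sigma].

Lemma comb_leaves_exist Z sigma : comb T C c Z sigma -> exists L, comb_leaves Z sigma L.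
Proof.
elim: Z sigma => [|z Z IH] sigma /=; first by exists [:: sigma].
move=> [tau1 [tau2 [neq step1 step2 /IH[L1 leaves1] /IH[L2 leaves2]]]].
by exists (L1 ++ L2), tau1, tau2, L1, L2.
Qed.

Lemma comb_leaves_prefix Z sigma L t : comb_leaves Z sigma L -> t \in L -> prefix sigma t.
Proof.
elim: Z sigma L => [|z Z IH] sigma L /=; first by move=> -> /[1!inE] /eqP ->; apply: prefix_refl.
move=> [tau1 [tau2 [L1 [L2 [-> [_ [[_ _ sigma_tau1] _] [[_ _ sigma_tau2] _] leaves1 leaves2]]]]]].
rewrite mem_cat => /orP[/(IH _ _ leaves1) | /(IH _ _ leaves2)]; exact: prefix_trans.
Qed.

Lemma comb_leaves_root Z sigma L : comb_leaves Z sigma L -> below L sigma.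
Proof.
elim: Z sigma L => [|z Z IH] sigma L /=; first by move=> ->; rewrite /below /= prefix_refl.
move=> [tau1 [tau2 [L1 [L2 [-> [_ [[_ _ sigma_tau1] _] _ /IH leaves1 _]]]]]].
by rewrite below_cat (below_trans sigma_tau1).
Qed.

Lemma below_leaves_prefix Z sigma L s :
  comb_leaves Z sigma L -> below L s -> size sigma <= size s -> prefix sigma s.
Proof. by move=> leaves /hasP[t tL st]; apply: prefix_common (comb_leaves_prefix leaves tL) st. Qed.

Lemma below_leaves_eq Z sigma L s :
  comb_leaves Z sigma L -> below L s -> size s = size sigma -> s = sigma.
Proof.
move=> leaves sL eq_size; apply/esym/(prefix_size_eq _ (esym eq_size)).
by apply: below_leaves_prefix leaves sL _; rewrite eq_size.
Qed.

Lemma below_leaves_in Z sigma L s :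
  is_tree T -> sigma \in T -> comb_leaves Z sigma L -> below L s -> s \in T.
Proof.
move=> treeT; elim: Z sigma L => [|z Z IH] sigma L sigmaT /=.
  by move=> -> /hasP[t /[1!inE] /eqP -> st]; apply: treeT st.
move=> [tau1 [tau2 [L1 [L2 [-> [_ [[tau1T _ _] _] [[tau2T _ _] _] leaves1 leaves2]]]]]].
by rewrite below_cat => /orP[/(IH _ _ tau1T leaves1) | /(IH _ _ tau2T leaves2)].
Qed.

Lemma below_leaves_other Z tau1 tau2 L2 s : comb_leaves Z tau2 L2 -> tau1 != tau2 ->
  size tau1 = size tau2 -> prefix tau1 s -> ~~ below L2 s.
Proof.
move=> leaves2 neq eq_size tau1_s; apply: contra neq => sL2.
apply/eqP/(prefix_common_eq tau1_s) => //; apply: below_leaves_prefix leaves2 sL2 _.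
by rewrite -eq_size size_prefix.
Qed.

Lemma comb_leaves_branch z Z sigma L s :
  comb_leaves (z :: Z) sigma L -> below L s -> z <= size s ->
  exists tau L', [/\ hom_step T C c sigma z tau, comb_leaves Z tau L', below L' s,
    forall t, below L' t -> below L t & forall t, prefix s t -> below L t -> below L' t].
Proof.
move=> [tau1 [tau2 [L1 [L2 [-> [neq step1 step2 leaves1 leaves2]]]]]].
have [[_ size1 _] _] := step1; have [[_ size2 _] _] := step2.
have eq12 : size tau1 = size tau2 by rewrite size1 size2.
rewrite below_cat => /orP[] sL z_s.
- have tau1_s : prefix tau1 s by apply: below_leaves_prefix leaves1 sL _; rewrite size1.
  exists tau1, L1; split => // t; first by rewrite below_cat => ->.
  move=> st; rewrite below_cat => /orP[// | tL2].
  by have := below_leaves_other leaves2 neq eq12 (prefix_trans tau1_s st); rewrite tL2.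
- have tau2_s : prefix tau2 s by apply: below_leaves_prefix leaves2 sL _; rewrite size2.
  exists tau2, L2; split => // t; first by rewrite below_cat orbC => ->.
  move=> st; rewrite below_cat => /orP[tL1 | //].
  have := below_leaves_other leaves1 _ (esym eq12) (prefix_trans tau2_s st).
  by rewrite eq_sym tL1 => /(_ neq).
Qed.

Lemma comb_leaves_levels Z sigma L : comb_leaves Z sigma L ->
  forall i, i <= size Z -> exists2 s, below L s & size s = nth 0 (size sigma :: Z) i.
Proof.
elim: Z sigma L => [|z Z IH] sigma L leaves [|i] //= lt_i;
  try by exists sigma; rewrite ?(comb_leaves_root leaves).
move: leaves => [tau1 [tau2 [L1 [L2 [-> [_ [[_ size1 _] _] _ leaves1 _]]]]]].
have [s sL1 size_s] := IH _ _ leaves1 i lt_i.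
by exists s; rewrite ?below_cat ?sL1 // size_s size1.
Qed.

Lemma comb_leaves_split Z sigma L : path ltn (size sigma) Z -> comb_leaves Z sigma L ->
  forall i, i < size Z -> forall s, below L s -> size s = nth 0 (size sigma :: Z) i ->
  exists a b, [/\ a != b, [/\ below L a, size a = nth 0 Z i & prefix s a],
                 [/\ below L b, size b = nth 0 Z i & prefix s b] &
                 forall t, below L t -> size t = nth 0 Z i -> prefix s t -> t = a \/ t = b].
Proof.
elim: Z sigma L => [//|z Z IH] sigma L /andP[_ pathZ] leaves [_|i lt_i] s sL size_s.
  have -> := below_leaves_eq leaves sL size_s.
  move: leaves => [tau1 [tau2 [L1 [L2 [-> [neq [[_ size1 s1] _] [[_ size2 s2] _] l1 l2]]]]]].
  exists tau1, tau2; split => //;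
    rewrite ?below_cat ?(comb_leaves_root l1) ?(comb_leaves_root l2) ?orbT //.
  move=> t; rewrite below_cat => /orP[] tL size_t _; [left | right].
    by apply: below_leaves_eq l1 tL _; rewrite size_t size1.
  by apply: below_leaves_eq l2 tL _; rewrite size_t size2.
have z_s : z <= size s by rewrite size_s path_leq_nth // ltnW.
have [tau [L' [[[_ size_tau _] _] leaves' sL' up down]]] := comb_leaves_branch leaves sL z_s.
rewrite -size_tau in pathZ size_s.
have [a [b [neq [aL' size_a sa] [bL' size_b sb] only]]] :=
  IH tau L' pathZ leaves' i lt_i s sL' size_s.
exists a, b; split; rewrite ?up //.
by move=> t tL size_t st; apply: only; rewrite ?down.
Qed.

Lemma comb_leaves_prehom Z sigma L : path ltn (size sigma) Z -> comb_leaves Z sigma L ->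
  forall i, i < size Z -> forall s t, below L s -> below L t ->
  size s = nth 0 (size sigma :: Z) i -> size t = nth 0 Z i -> prefix s t ->
  exists zeta, [/\ below L zeta, prefix s zeta, prefix zeta t & C zeta = c].
Proof.
elim: Z sigma L => [//|z Z IH] sigma L /andP[_ pathZ] leaves [_|i lt_i] s t sL tL
  size_s size_t st.
  have -> := below_leaves_eq leaves sL size_s.
  have [tau [L' [[[_ size_tau _] [zeta [s_zeta zeta_tau C_zeta]]] leaves' tL' _ _]]] :=
    comb_leaves_branch leaves tL (eq_leq (esym size_t)).
  have tau_t : t = tau by apply: below_leaves_eq leaves' tL' _; rewrite size_t size_tau.
  by exists zeta; rewrite -tau_t in zeta_tau; rewrite (below_trans zeta_tau tL).
have z_s : z <= size s by rewrite size_s path_leq_nth // ltnW.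
have [tau [L' [[[_ size_tau _] _] leaves' sL' up down]]] := comb_leaves_branch leaves sL z_s.
rewrite -size_tau in pathZ size_s.
have [zeta [zL' s_zeta zeta_t C_zeta]] :=
  IH tau L' pathZ leaves' i lt_i s t sL' (down t st tL) size_s size_t st.
by exists zeta; rewrite up.
Qed.

Lemma comb_subtree Z rho :
  is_tree T -> rho \in T -> path ltn (size rho) Z -> comb T C c Z rho ->
  exists S, [/\ is_tree S, {subset S <= T}, quasistrong (size rho :: Z) S
              & prehomogeneous C (size rho :: Z) S].
Proof.
move=> treeT rhoT pathZ /comb_leaves_exist [L leaves].
pose S := [seq s <- T | below L s].
have memS s : (s \in S) = below L s.
  by rewrite mem_filter andb_idr // => /(below_leaves_in treeT rhoT leaves).
have treeS : is_tree S by move=> s t; rewrite !memS => tL st; apply: below_trans st tL.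
exists S; split => //; first by move=> s; rewrite mem_filter => /andP[].
  split; [done | split => [i lt_i | i lt_i sigma]].
    by have [s sL size_s] := comb_leaves_levels leaves lt_i; exists s; rewrite memS.
  rewrite memS => sigmaL size_sigma.
  have [a [b [neq [aL size_a sa] [bL size_b sb] only]]] :=
    comb_leaves_split pathZ leaves lt_i sigmaL size_sigma.
  split.
    apply: (size_exts_two neq); rewrite /ext_at ?memS // => tau [/[!memS] tauL size_tau s_tau].
    exact: only.
  move=> t1 t2 /mem_exts[_ size1 _] /mem_exts[_ size2 _].
  by apply: contra => /compatible_size_eq ->; rewrite ?size1 ?size2.
exists c => i lt_i sigma tau; rewrite !memS => sigmaL size_sigma tauL size_tau sigma_tau.
have [zeta [zL sigma_zeta zeta_tau C_zeta]] :=
  comb_leaves_prehom pathZ leaves lt_i sigmaL tauL size_sigma size_tau sigma_tau.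
by exists zeta; rewrite memS.
Qed.

End Leaves.

Lemma quasistrong_ext X T i j sigma : quasistrong X T -> sigma \in T ->
  size sigma = nth 0 X i -> i <= j -> j < size X -> exists tau, ext_at T sigma (nth 0 X j) tau.
Proof.
move=> [_ [_ qsplit]] sigmaT size_sigma.
elim: j => [|j IH] le_ij lt_jX.
  by move: le_ij; rewrite leqn0 => /eqP i0; subst i; exists sigma; split; rewrite ?prefix_refl.
move: le_ij; rewrite leq_eqVlt => /predU1P[i_j1 | lt_ij].
  by subst i; exists sigma; split; rewrite ?prefix_refl.
have [tau [tauT size_tau sigma_tau]] := IH lt_ij (ltnW lt_jX).
have [/exts_two [rho [_ [_ [rhoT size_rho tau_rho] _]]] _] := qsplit j lt_jX tau tauT size_tau.
by exists rho; split; rewrite // (prefix_trans sigma_tau).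
Qed.

Lemma quasistrong_splitting X T : sorted ltn X -> quasistrong X T -> splitting T X.
Proof.
move=> sX qsX l1 l2 /(nthP 0)[i lt_iX <-] /(nthP 0)[j lt_jX <-] lt12 sigma sigmaT size_sigma.
have lt_ij : i < j.
  by rewrite ltnNge; apply: contraL lt12 => le_ji; rewrite -leqNgt sorted_nth_leq.
have [_ [_ /(_ i (leq_ltn_trans lt_ij lt_jX) sigma sigmaT size_sigma) [two_exts _]]] := qsX.
have [tau1 [tau2 [neq [tau1T size1 s1] [tau2T size2 s2]]]] := exts_two two_exts.
have [rho1 [rho1T size_rho1 tau_rho1]] := quasistrong_ext qsX tau1T size1 lt_ij lt_jX.
have [rho2 [rho2T size_rho2 tau_rho2]] := quasistrong_ext qsX tau2T size2 lt_ij lt_jX.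
exists rho1, rho2; split.
- by apply: prefix_neq tau_rho1 tau_rho2 _ neq; rewrite size1 size2.
- by split; rewrite // (prefix_trans s1).
- by split; rewrite // (prefix_trans s2).
Qed.

Lemma quasistrong_root X T rho : X != [::] -> size rho = head 0 X -> quasistrong X T ->
  (forall s, s \in T -> compatible s rho) -> rho \in T.
Proof.
case: X => // x X _ size_rho [_ [levels _]] compat.
have [s [sT size_s]] := levels 0 isT.
by rewrite -(compatible_size_eq _ (compat s sT)) // size_s size_rho.
Qed.

Definition strings m : seq (seq bool) := map val (enum {:m.-tuple bool}).

Lemma size_strings m : size (strings m) = 2 ^ m.
Proof. by rewrite size_map -cardE card_tuple card_bool. Qed.

Lemma mem_strings m s : (s \in strings m) = (size s == m).
Proof.
apply/mapP/eqP => [[t _ ->] | size_s]; first exact: size_tuple.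
by exists (Tuple (introT eqP size_s)); rewrite ?mem_enum.
Qed.

Theorem lemma2p17 :
  exists hbar : nat -> nat -> nat -> nat,
    primitive_recursive3 hbar /\
    forall (n k : nat) (X : seq nat) (T : seq bool -> seq (seq bool))
           (C : seq bool -> nat),
      1 <= n ->
      finset_nat X -> X != [::] ->
      hbar (head 0 X) n k <= size X ->
      (forall rho, size rho = head 0 X ->
         quasistrong X (T rho) /\ (forall s, s \in T rho -> compatible s rho)) ->
      (forall rho s, size rho = head 0 X -> s \in T rho -> C s < k) ->
      exists (Z : seq nat) (S : seq bool -> seq (seq bool)),
        [/\ finset_nat Z, {subset Z <= X}, size Z = n,
            head 0 Z = head 0 X &
            forall rho, size rho = head 0 X ->
              [/\ is_tree (S rho), {subset S rho <= T rho},
                  quasistrong Z (S rho) & prehomogeneous C Z (S rho)]].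
Proof.
exists hbar; split; first exact: hbar_primrec.
move=> n k X T C n_gt0 sX X_nil bound HT HC; set x0 := head 0 X in bound HT HC *.
have rootR rho : rho \in strings x0 -> [/\ rho \in T rho, size rho = x0,
    splitting (T rho) X & colours_lt (T rho) C k X rho].
  rewrite mem_strings => /eqP size_rho; have [qsT compatT] := HT rho size_rho.
  split; [exact: quasistrong_root qsT compatT | done | exact: quasistrong_splitting qsT |].
  by apply: tree_colours_lt; [case: qsT | move=> s; apply: HC].
have boundR : iter (size (strings x0)) (comb_bound k) n.-1.+1 <= size X.
  by rewrite size_strings prednK.
have [Z [pathZ subZ sizeZ combsZ]] := combs_exist sX boundR rootR.
have /functional_choice [S subtreeS] rho : exists S, size rho = x0 -> [/\ is_tree S,
    {subset S <= T rho}, quasistrong (x0 :: Z) S & prehomogeneous C (x0 :: Z) S].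
  have [size_rho | neq] := eqVneq (size rho) x0; last first.
    by exists [::] => /eqP; rewrite (negbTE neq).
  have rho_x0 : rho \in strings x0 by rewrite mem_strings size_rho.
  have [[c combZ] [rhoT _ _ _]] := (combsZ rho rho_x0, rootR rho rho_x0).
  have [[treeT _] _] := HT rho size_rho.
  have pathZ' : path ltn (size rho) Z by rewrite size_rho.
  by have [S' subtreeS'] := comb_subtree treeT rhoT pathZ' combZ; exists S'; rewrite -size_rho.
have x0X : x0 \in X by rewrite /x0 -nth0 mem_nth // lt0n size_eq0.
exists (x0 :: Z), S; split => //; last by rewrite /= sizeZ prednK.
by move=> x; rewrite inE => /predU1P[-> | /subZ].
Qed.
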